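(* Let $G$ be a non-complete double-critical $k$-chromatic graph with $k\ge 6$. Then no minimal separating set $S$ of $G$ can be partitioned into two disjoint sets $A$ and $B$ such that $G[A]$ is edge-empty and $G[B]$ is complete.
   Context: All graphs are finite and simple. A graph $G$ is (vertex-)critical if $\chi(G-v)<\chi(G)$ for every vertex $v\in V(G)$. A critical graph $G$ is double-critical if $\chi(G-x-y)\le\chi(G)-2$ for every edge $xy\in E(G)$. A separating set is a set $S\subseteq V(G)$ such that $G-S$ is disconnected; it is minimal if no proper subset is separating. Either of $A,B$ may be empty. *)

From mathcomp Require Import all_boot.
Set Implicit Arguments. Unset Strict Implicit. Unset Printing Implicit Defensive.

Definition simple_graph (T : finType) (e : rel T) : Prop :=
  symmetric e /\ irreflexive e.

Definition colorableb (T : finType) (e : rel T) (W : {set T}) (k : nat) : bool :=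
  [exists f : {ffun T -> 'I_k},
     [forall x in W, forall y in W, e x y ==> (f x != f y)]].

(* Chromatic number of G[W]: least k <= #|T| with a proper k-colouring.
   For irreflexive e, #|T| colours always suffice, so this is the true
   chromatic number. *)
Definition chi_on (T : finType) (e : rel T) (W : {set T}) : nat :=
  \big[minn/#|T|]_(k < #|T|.+1 | colorableb e W k) k.

Definition chi (T : finType) (e : rel T) : nat := chi_on e [set: T].

Definition separating (T : finType) (e : rel T) (S : {set T}) : Prop :=
  exists u v, u \notin S /\ v \notin S /\
    ~~ connect [rel x y | [&& e x y, x \notin S & y \notin S]] u v.

Definition minimal_separating (T : finType) (e : rel T) (S : {set T}) : Prop :=
  separating e S /\ forall S' : {set T}, S' \proper S -> ~ separating e S'.

Definition critical (T : finType) (e : rel T) : Prop :=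
  forall v : T, chi_on e [set~ v] < chi e.

Definition double_critical (T : finType) (e : rel T) : Prop :=
  critical e /\
  forall x y : T, e x y -> chi_on e (~: [set x; y]) <= chi e - 2.

Definition complete_graph (T : finType) (e : rel T) : Prop :=
  forall x y : T, x != y -> e x y.

From mathcomp Require Import all_boot.
Set Implicit Arguments. Unset Strict Implicit. Unset Printing Implicit Defensive.

(* Split G - S into the component D of a vertex and the rest D'; by minimality
   every vertex of S has a neighbour on both sides.  On each side pick x adjacent
   to a vertex s0 of S, chosen in A when A is nonempty, and (k-2)-colour G - x - s0
   by double-criticality; one fresh colour for the independent set I = A (or {s0})
   gives a (k-1)-colouring of G minus that side in which two vertices of S share a
   colour iff both lie in I, because S minus I lies in the clique B.  The colourings
   of G - D and G - D' thus induce the same partition of S, so after permuting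
   colours they agree on S and glue, across S, into a (k-1)-colouring of G. *)


Lemma injective_extension (C : finType) (P : {set C}) (g : C -> C) :
  {in P &, injective g} -> exists2 s : C -> C, injective s & {in P, s =1 g}.
Proof.
move=> ginj; pose P' := enum (~: P); pose Q' := enum (~: (g @: P)).
have sizeQ' : size Q' = size P'.
  apply/eqP; rewrite -!cardE -(eqn_add2l #|g @: P|) cardsC card_in_imset //.
  by rewrite cardsC.
have P'P c : (c \in P') = (c \notin P) by rewrite mem_enum inE.
have idxP' c : c \notin P -> index c P' < size P' by rewrite index_mem P'P.
pose t c := nth c Q' (index c P').
have tQ c : c \notin P -> t c \notin g @: P.
  by move=> cP; rewrite -in_setC -mem_enum mem_nth // sizeQ' idxP'.
have tinj c c' : c \notin P -> c' \notin P -> t c = t c' -> c = c'.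
  move=> cP c'P; rewrite /t (set_nth_default c) ?sizeQ' ?idxP' //.
  move/eqP; rewrite nth_uniq ?enum_uniq ?sizeQ' ?idxP' // => /eqP.
  by apply: (index_inj c); rewrite P'P.
exists (fun c => if c \in P then g c else t c) => [c c'|c ->//].
case: ifPn => cP; case: ifPn => c'P; [exact: ginj| | |exact: tinj].
- by move=> gt; have := tQ c' c'P; rewrite -gt imset_f.
- by move=> tg; have := tQ c cP; rewrite tg imset_f.
Qed.

Lemma relabel_colours (T C : finType) (S : {set T}) (h1 h2 : T -> C) :
  {in S &, forall s t, (h1 s == h1 t) = (h2 s == h2 t)} ->
  exists2 r : C -> C, injective r & {in S, forall s, r (h1 s) = h2 s}.
Proof.
move=> h12; pose g c := if [pick s in S | h1 s == c] is Some s then h2 s else c.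
have gh1 s : s \in S -> g (h1 s) = h2 s.
  move=> sS; rewrite /g; case: pickP => [s' /andP[s'S /eqP h1s'] | /(_ s)].
    by apply/eqP; rewrite -h12 ?h1s'.
  by rewrite sS eqxx.
have [r rinj rg] : exists2 r : C -> C, injective r & {in h1 @: S, r =1 g}.
  apply: injective_extension => _ _ /imsetP[s sS ->] /imsetP[t tS ->].
  by rewrite !gh1 // => /eqP; rewrite -h12 // => /eqP.
by exists r => // s sS; rewrite rg ?imset_f ?gh1.
Qed.

Section Colourings.

Variables (T : finType) (e : rel T).

Definition proper_on (C : eqType) (W : {set T}) (h : T -> C) : Prop :=
  {in W &, forall y z, e y z -> h y != h z}.

Lemma proper_onS (C : eqType) (W W' : {set T}) (h : T -> C) :
  W' \subset W -> proper_on W h -> proper_on W' h.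
Proof. by move=> /subsetP sW hW y z /sW yW /sW zW; apply: hW. Qed.

Lemma colorableP (W : {set T}) m :
  reflect (exists h : T -> 'I_m, proper_on W h) (colorableb e W m).
Proof.
apply: (iffP existsP) => [[f /forallP fW]|[h hW]].
  exists f => y z yW zW eyz.
  by move/(_ y): fW; rewrite yW => /forallP/(_ z); rewrite zW eyz.
exists [ffun x => h x]; apply/forall_inP => y yW; apply/forall_inP => z zW.
by apply/implyP => eyz; rewrite !ffunE hW.
Qed.

Lemma colorable_widen (W : {set T}) m m' :
  m <= m' -> colorableb e W m -> colorableb e W m'.
Proof.
move=> le_mm' /colorableP[h hW]; apply/colorableP.
exists (widen_ord le_mm' \o h) => y z yW zW /(hW y z yW zW).
by apply: contra => /eqP[/val_inj->].
Qed.

Lemma colorable_chi_on (W : {set T}) :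
  irreflexive e -> colorableb e W (chi_on e W).
Proof.
move=> eirr; apply: (big_ind (colorableb e W)) => [|m m'|//].
- apply/colorableP; exists enum_rank => y z _ _; apply: contraTneq.
  by move/enum_rank_inj->; rewrite eirr.
- by rewrite /minn; case: ifP.
Qed.

Lemma bigminn_leq (I : eqType) (s : seq I) (P : pred I) (F : I -> nat) x j :
  j \in s -> P j -> \big[minn/x]_(i <- s | P i) F i <= F j.
Proof.
elim: s => //= i s IHs; rewrite inE big_cons => /predU1P[<- ->|js Pj].
  exact: geq_minl.
by case: ifP => _; [apply: leq_trans (geq_minr _ _) _|]; apply: IHs.
Qed.

Lemma chi_on_min (W : {set T}) m : colorableb e W m -> chi_on e W <= m.
Proof.
move=> colW; have [le_mT|lt_Tm] := leqP m #|T|.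
  have lt_mT1 : m < #|T|.+1 by [].
  by apply: (@bigminn_leq _ _ _ _ _ (Ordinal lt_mT1)); rewrite ?mem_index_enum.
apply: leq_trans (ltnW lt_Tm); apply: (big_ind (fun m => m <= #|T|)) => //.
by move=> a b le_aT _; apply: leq_trans (geq_minl a b) le_aT.
by move=> i _; have := ltn_ord i.
Qed.

Lemma proper_colouring_chi_on (W : {set T}) m :
  irreflexive e -> chi_on e W <= m -> exists h : T -> 'I_m, proper_on W h.
Proof.
by move=> eirr le_chi_m; apply/colorableP/(colorable_widen le_chi_m)/colorable_chi_on.
Qed.

Definition with_class (I : {set T}) n (f : T -> 'I_n) (z : T) : 'I_n.+1 :=
  if z \in I then ord0 else lift ord0 (f z).

Lemma with_class_eq (I : {set T}) n (f : T -> 'I_n) y z :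
  (with_class I f y == with_class I f z) =
    if y \in I then z \in I else (z \notin I) && (f y == f z).
Proof. by rewrite /with_class; case: (y \in I); case: (z \in I). Qed.

Lemma proper_on_with_class (I W : {set T}) n (f : T -> 'I_n) :
  {in I &, forall y z, ~~ e y z} -> proper_on W f ->
  proper_on (W :|: I) (with_class I f).
Proof.
move=> Iind fW y z; rewrite !inE => yWI zWI eyz; rewrite with_class_eq.
case: ifPn => yI; first by apply: contraL eyz; apply: Iind.
case: (boolP (z \in I)) => //= zI; apply: (fW y z) eyz;
  by [move: yWI; rewrite (negbTE yI) orbF | move: zWI; rewrite (negbTE zI) orbF].
Qed.

Lemma glue_proper (C : finType) (S D : {set T}) (h1 h2 : T -> C) :
  symmetric e -> (forall y z, y \in D -> z \notin D -> e y z -> z \in S) ->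
  proper_on (~: D) h1 -> proper_on (D :|: S) h2 ->
  {in S &, forall s t, (h1 s == h1 t) = (h2 s == h2 t)} ->
  exists h : T -> C, proper_on [set: T] h.
Proof.
move=> esym Dout h1D h2D h12; have [r rinj rh1] := relabel_colours h12.
have cross y z : y \in D -> z \notin D -> e y z -> h2 y != r (h1 z).
  move=> yD zD eyz; have zS := Dout _ _ yD zD eyz.
  by rewrite rh1 // h2D // inE ?yD ?zS ?orbT.
exists (fun z => if z \in D then h2 z else r (h1 z)) => y z _ _ eyz.
case: ifPn => yD; case: ifPn => zD.
- by apply: h2D; rewrite // inE ?yD ?zD.
- exact: cross.
- by rewrite eq_sym cross // esym.
- by rewrite (inj_eq rinj) h1D // inE.
Qed.


End Colourings.

Section Separation.

Variables (T : finType) (e : rel T).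

Definition avoiding (S : {set T}) : rel T :=
  [rel x y | [&& e x y, x \notin S & y \notin S]].

Lemma connect_closed_in (R : rel T) (D : {set T}) x y :
  (forall x y, x \in D -> R x y -> y \in D) -> connect R x y -> x \in D -> y \in D.
Proof.
move=> closedD /connectP[p + ->]; elim: p x => [|z p IHp] x //= /andP[Rxz pz] xD.
exact: IHp pz (closedD _ _ xD Rxz).
Qed.

Lemma connect_avoiding_notin (S : {set T}) x y :
  x \notin S -> connect (avoiding S) x y -> y \notin S.
Proof.
move=> xS xy; have := connect_closed_in (D := ~: S) _ xy; rewrite !inE; apply=> //.
by move=> {xy} x' y' _ /and3P[_ _]; rewrite inE.
Qed.

Lemma minimal_separating_neighbour (S : {set T}) u v s :
  minimal_separating e S -> u \notin S -> v \notin S ->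
  ~~ connect (avoiding S) u v -> s \in S ->
  exists2 x, connect (avoiding S) u x & e x s.
Proof.
move=> [_ minS] uS vS nuv sS.
have [/existsP[x /andP[ux exs]]|noN] :=
  boolP [exists x, connect (avoiding S) u x && e x s]; first by exists x.
case: (minS (S :\ s)); first exact: properD1.
exists u, v; rewrite !inE (negbTE uS) (negbTE vS) !andbF; do 2!split=> //.
apply: contra nuv => uv.
have := connect_closed_in (D := [set z | connect (avoiding S) u z]) _ uv.
rewrite !inE connect0; apply=> // {uv} x y; rewrite !inE => ux /and3P[exy _].
rewrite !inE negb_and negbK.
have xS : x \notin S by apply: connect_avoiding_notin ux.
case/orP=> [/eqP ys|yS].
  by move: noN; rewrite negb_exists => /forallP/(_ x); rewrite ux -ys exy.
by apply: connect_trans ux (connect1 _); rewrite /avoiding /= exy xS.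
Qed.

Definition full_side (S D : {set T}) : Prop :=
  [/\ D \subset ~: S, D != set0 & forall s, s \in S -> exists2 x, x \in D & e x s].

Lemma minimal_separating_split (S : {set T}) :
  symmetric e -> minimal_separating e S ->
  exists D : {set T}, [/\ full_side S D, full_side S (~: (D :|: S))
    & forall y z, y \in D -> z \notin D -> e y z -> z \in S].
Proof.
move=> esym minS; have [u [v [uS [vS nuv]]]] := minS.1.
have avoid_sym : connect_sym (avoiding S).
  by apply: sym_connect_sym => x y; rewrite /avoiding /= esym (andbC (x \notin S)).
pose D := [set z | connect (avoiding S) u z].
have DS z : z \in D -> z \notin S by rewrite inE; apply: connect_avoiding_notin.
exists D; split.
- split; first by apply/subsetP => z /DS; rewrite inE.
    by apply/set0Pn; exists u; rewrite inE connect0.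
  move=> s sS; have [x ux exs] := minimal_separating_neighbour minS uS vS nuv sS.
  by exists x; rewrite ?inE.
- split; first by apply/subsetP => z; rewrite !inE negb_or => /andP[].
    by apply/set0Pn; exists v; rewrite !inE negb_or nuv.
  move=> s sS; have [|x vx exs] := minimal_separating_neighbour minS vS uS _ sS.
    by rewrite avoid_sym.
  exists x => //; rewrite !inE negb_or (connect_avoiding_notin vS vx) andbT.
  by apply: contra nuv => ux; apply: connect_trans ux _; rewrite avoid_sym.
- move=> y z yD zD eyz; apply: contraNT zD => zS; rewrite inE.
  have uy : connect (avoiding S) u y by rewrite inE in yD.
  apply: connect_trans uy (connect1 _).
  by rewrite /avoiding /= eyz zS DS.
Qed.

End Separation.

Section DoubleCritical.

Variables (T : finType) (e : rel T) (n : nat).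
Hypotheses (eirr : irreflexive e) (dcrit : double_critical e) (chin : chi e = n.+2).

Lemma side_colouring_free (S D : {set T}) :
  full_side e S D -> exists h : T -> 'I_n.+1, proper_on e (~: D) h.
Proof.
move=> [_ /set0Pn[x xD] _].
have [|h hx] := proper_colouring_chi_on (W := [set~ x]) (m := n.+1) eirr.
  by rewrite -ltnS -chin; apply: dcrit.1.
exists h; apply: proper_onS hx; apply/subsetP => z; rewrite !inE.
by apply: contraNneq => ->.
Qed.

Lemma side_colouring (S I D : {set T}) s0 :
  full_side e S D -> s0 \in S -> s0 \in I ->
  {in I &, forall y z, ~~ e y z} -> {in S :\: I &, forall s t, s != t -> e s t} ->
  exists h : T -> 'I_n.+1, proper_on e (~: D) h /\
    {in S &, forall s t, (h s == h t) = (s == t) || (s \in I) && (t \in I)}.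
Proof.
move=> [/subsetP DS _ nbD] s0S s0I Iind Scl.
have [x xD exs0] := nbD s0 s0S.
have xS : x \notin S by have := DS x xD; rewrite inE.
have [|f fW] := proper_colouring_chi_on (W := ~: [set x; s0]) (m := n) eirr.
  by have := dcrit.2 x s0 exs0; rewrite chin !subSS subn0.
have inW z : z != x -> z \notin I -> z \in ~: [set x; s0].
  by move=> zx zI; rewrite !inE negb_or zx; apply: contraNneq zI => ->.
exists (with_class I f); split.
  apply: proper_onS (proper_on_with_class Iind fW); apply/subsetP => z.
  rewrite inE => zD; rewrite inE; case: (boolP (z \in I)) => zI; rewrite ?orbT //.
  by rewrite inW //; apply: contraNneq zD => ->.
move=> s t sS tS; rewrite with_class_eq.
have neq_x u : u \in S -> u != x by apply: contraTneq => ->.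
case: ifPn => sI; first by case: (eqVneq s t) => [<-|]; rewrite ?sI.
case: (eqVneq s t) => [<-|st]; first by rewrite (negbTE sI) eqxx.
case: (boolP (t \in I)) => //= tI; apply/negbTE/(fW s t); rewrite ?inW ?neq_x //.
by apply: Scl; rewrite ?inE ?sI ?tI.
Qed.

Lemma independent_clique_anchor (S A B : {set T}) s1 :
  s1 \in S -> A :|: B = S ->
  {in A &, forall x y, ~~ e x y} -> {in B &, forall x y, x != y -> e x y} ->
  exists (I : {set T}) s0, [/\ s0 \in S, s0 \in I, {in I &, forall x y, ~~ e x y}
    & {in S :\: I &, forall s t, s != t -> e s t}].
Proof.
move=> s1S SAB Aind Bcl.
have SB s (I : {set T}) : A \subset I -> s \in S :\: I -> s \in B.
  move=> /subsetP AI; rewrite !inE -SAB inE => /andP[sI /orP[/AI|//]].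
  by rewrite (negbTE sI).
have [A0|/set0Pn[a aA]] := eqVneq A set0.
  exists [set s1], s1; split; rewrite ?inE //.
    by move=> x y /set1P-> /set1P->; rewrite eirr.
  by move=> s t sS tS; apply: Bcl; apply: (SB _ [set s1]); rewrite ?A0 ?sub0set.
exists A, a; split => //; first by rewrite -SAB inE aA.
by move=> s t sS tS; apply: Bcl; apply: (SB _ A).
Qed.

Lemma side_colourings_agree (S A B D1 D2 : {set T}) :
  A :|: B = S -> {in A &, forall x y, ~~ e x y} ->
  {in B &, forall x y, x != y -> e x y} ->
  full_side e S D1 -> full_side e S D2 ->
  exists h1 h2 : T -> 'I_n.+1,
    [/\ proper_on e (~: D1) h1, proper_on e (~: D2) h2
       & {in S &, forall s t, (h1 s == h1 t) = (h2 s == h2 t)}].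
Proof.
move=> SAB Aind Bcl side1 side2.
have [S0|/set0Pn[s1 s1S]] := eqVneq S set0.
  have [h1 h1D] := side_colouring_free side1.
  have [h2 h2D] := side_colouring_free side2.
  by exists h1, h2; split=> // s t; rewrite S0 inE.
have [I [s0 [s0S s0I Iind Scl]]] := independent_clique_anchor s1S SAB Aind Bcl.
have [h1 [h1D h1S]] := side_colouring side1 s0S s0I Iind Scl.
have [h2 [h2D h2S]] := side_colouring side2 s0S s0I Iind Scl.
by exists h1, h2; split=> // s t sS tS; rewrite h1S ?h2S.
Qed.

End DoubleCritical.

Theorem proposition20 (T : finType) (e : rel T) (k : nat) :
  simple_graph e ->
  ~ complete_graph e ->
  double_critical e ->
  chi e = k ->
  6 <= k ->
  forall S : {set T}, minimal_separating e S ->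
  ~ (exists A B : {set T},
       [disjoint A & B] /\ A :|: B = S /\
       (forall x y, x \in A -> y \in A -> ~~ e x y) /\
       (forall x y, x \in B -> y \in B -> x != y -> e x y)).
Proof.
move=> [esym eirr] _ dcrit chik k6 S minS [A [B [_ [SAB [Aind Bcl]]]]].
have [n chin] : exists n, chi e = n.+2.
  by exists k.-2; rewrite chik; case: k k6 {chik} => [|[]].
have [D [side1 side2 Dout]] := minimal_separating_split esym minS.
have [h1 [h2 [h1D h2D h12]]] :=
  side_colourings_agree eirr dcrit chin SAB Aind Bcl side1 side2.
rewrite setCK in h2D; have [h hT] := glue_proper esym Dout h1D h2D h12.
have : colorableb e [set: T] n.+1 by apply/colorableP; exists h.
by move/chi_on_min; rewrite -/(chi e) chin ltnn.
Qed.
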